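(* Let $n\ge 2$, let $W(r)=(1-r^2)^2$, and let $u\in C^2(\mathbb R^n,[-1,1])$ solve $\Delta u=W'(u)$ in $\mathbb R^n$, with $\partial u/\partial x_n>0$ in $\mathbb R^n$, and satisfying the energy bound: there is $C>0$ such that $\int_{B_R}\big(\tfrac12|\nabla u|^2+W(u)\big)\,dx\le CR^{n-1}$ for every $R>1$. Let $V\subseteq{\rm C}(d_o,h_o)$ be the (support of the) associated limit varifold, as described in the context. (a) If there exists $\overline x=(0,\dots,0,\overline x_n)$ with $\overline x_n\in(0,h_o)$ and $\overline x\notin V$, then $\lim_{x_n\to+\infty}u(x',x_n)=1$ for every $x'\in\mathbb R^{n-1}$. (b) If there exists $\underline x=(0,\dots,0,\underline x_n)$ with $\underline x_n\in(-h_o,0)$ and $\underline x\notin V$, then $\lim_{x_n\to-\infty}u(x',x_n)=-1$ for every $x'\in\mathbb R^{n-1}$.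
   Context: Points of $\mathbb R^n$ are written $x=(x',x_n)\in\mathbb R^{n-1}\times\mathbb R$. For $\varepsilon>0$ set $u_\varepsilon(x):=u(x/\varepsilon)$. For $d,h>0$, ${\rm C}(d,h):=\{x: |x'|<d,\ |x_n|<h\}$; the numbers $d_o,h_o>0$ are fixed. Limit varifold: under the energy bound, by Hutchinson–Tonegawa there is a sequence $\varepsilon_j\to0^+$ such that the Radon measures $\mu_j:=\big(\tfrac{\varepsilon_j}{2}|\nabla u_{\varepsilon_j}|^2+\tfrac1{\varepsilon_j}W(u_{\varepsilon_j})\big)dx$ converge weakly-* on ${\rm C}(d_o,h_o)$ to a Radon measure $\mu$, which is (a constant multiple of) the weight of a limit varifold; $V$ denotes its support $\operatorname{supp}\mu$, a relatively closed subset of ${\rm C}(d_o,h_o)$. Along this sequence (Hutchinson–Tonegawa): $u_{\varepsilon_j}\to\pm1$ uniformly on each connected compact subset of ${\rm C}(d_o,h_o)\setminus V$; and for every open $\tilde U\Subset{\rm C}(d_o,h_o)$, every $c\in(-1,1)$ and every $\delta>0$, for all sufficiently large $j$, $\{|u_{\varepsilon_j}|\le c\}\cap\tilde U\subseteq\bigcup_{p\in V}B_\delta(p)$. *)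

From HB Require Import structures.
From mathcomp Require Import all_boot all_order all_algebra.
From mathcomp Require Import all_classical all_reals all_analysis.
Set Implicit Arguments. Unset Strict Implicit. Unset Printing Implicit Defensive.
Import Order.TTheory GRing.Theory Num.Theory.
Import numFieldNormedType.Exports.
Local Open Scope classical_set_scope.
Local Open Scope ring_scope.

Section Defs.
Variable R : realType.

(* R^n is 'rV[R]_n.  For n = m.+1, x = (x', x_n) with x' the first m
   coordinates and x_n = x 0 ord_max the last one. *)
Definition lastc (m : nat) (x : 'rV[R]_m.+1) : R := x 0 ord_max.
Definition xprime (m : nat) (x : 'rV[R]_m.+1) : 'rV[R]_m :=
  \row_(j < m) x 0 (widen_ord (leqnSn m) j).
Definition pt (m : nat) (x' : 'rV[R]_m) (t : R) : 'rV[R]_m.+1 :=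
  \row_(i < m.+1) (if unlift ord_max i is Some j then x' 0 j else t).

(* Euclidean norm (the library norm on 'rV is the sup norm). *)
Definition enorm (k : nat) (x : 'rV[R]_k) : R :=
  Num.sqrt (\sum_(i < k) x 0 i ^+ 2).
Definition eball (k : nat) (p : 'rV[R]_k) (r : R) : set 'rV[R]_k :=
  [set y | enorm (y - p) < r].

Definition cyl (m : nat) (d h : R) : set 'rV[R]_m.+1 :=
  [set x | enorm (xprime x) < d /\ `|lastc x| < h].

Definition ev (k : nat) (i : 'I_k) : 'rV[R]_k := delta_mx 0 i.
Definition partial (k : nat) (i : 'I_k) (f : 'rV[R]_k -> R) : 'rV[R]_k -> R :=
  fun x => 'D_(ev i) f x.
Definition C2 (k : nat) (f : 'rV[R]_k -> R) : Prop :=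
  continuous f /\
  forall i : 'I_k,
    (forall x, derivable f x (ev i)) /\ continuous (partial i f) /\
    forall j : 'I_k,
      (forall x, derivable (partial i f) x (ev j)) /\
      continuous (partial j (partial i f)).
Definition lap (k : nat) (f : 'rV[R]_k -> R) (x : 'rV[R]_k) : R :=
  \sum_(i < k) partial i (partial i f) x.
Definition gradsq (k : nat) (f : 'rV[R]_k -> R) (x : 'rV[R]_k) : R :=
  \sum_(i < k) (partial i f x) ^+ 2.

Definition W (r : R) : R := (1 - r ^+ 2) ^+ 2.
Definition Wp (r : R) : R := 4 * r * (r ^+ 2 - 1).

(* Lebesgue integral on R^k of an extended-real function, as the iterated
   one-dimensional Lebesgue integral (Tonelli/Fubini). *)
Definition rcons0 (k : nat) (t : R) (y : 'rV[R]_k) : 'rV[R]_k.+1 :=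
  \row_(i < k.+1) (if unlift ord0 i is Some j then y 0 j else t).

Fixpoint iint (k : nat) : ('rV[R]_k -> \bar R) -> \bar R :=
  match k return ('rV[R]_k -> \bar R) -> \bar R with
  | 0 => fun f => f 0
  | k'.+1 => fun f =>
      (\int[@lebesgue_measure R]_(t in setT)
          iint (fun y : 'rV[R]_k' => f (rcons0 (t : R) y)))%E
  end.

Definition BorelT (k : nat) := g_sigma_algebraType (@open 'rV[R]_k).

Definition resc (k : nat) (u : 'rV[R]_k -> R) (eps : R) : 'rV[R]_k -> R :=
  fun x => u (eps^-1 *: x).

(* density of mu_eps = (eps/2 |grad u_eps|^2 + W(u_eps)/eps) dx *)
Definition edens (k : nat) (u : 'rV[R]_k -> R) (eps : R) (x : 'rV[R]_k) : R :=
  eps / 2 * gradsq (resc u eps) x + W (resc u eps x) / eps.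

Definition Cc_in (k : nat) (U : set 'rV[R]_k) (phi : 'rV[R]_k -> R) : Prop :=
  continuous phi /\ compact (closure [set x | phi x != 0]) /\
  closure [set x | phi x != 0] `<=` U.

Definition msupp (k : nat) (U : set 'rV[R]_k)
    (mu : {measure set (BorelT k) -> \bar R}) : set 'rV[R]_k :=
  [set p | U p /\ forall r : R, 0 < r -> (0 < mu (eball p r `&` U))%E].

End Defs.

From HB Require Import structures.
From mathcomp Require Import all_boot all_order all_algebra.
From mathcomp Require Import all_classical all_reals all_analysis.
From mathcomp Require Import lra ring.
Import Order.TTheory GRing.Theory Num.Theory.
Import numFieldNormedType.Exports.
Local Open Scope classical_set_scope.
Local Open Scope ring_scope.
Set Implicit Arguments. Unset Strict Implicit.

(* Around a point (0, xn) off the limit varifold, the Hutchinson-Tonegawa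
   uniform convergence applies on a small horizontal segment
   {(s x', xn) | 0 <= s <= del}: it is compact, connected and avoids the
   support.  Evaluating u_eps at (eps x', xn) shows u(x', xn / eps_j) -> +-1.
   Since t |-> u(x', t) is increasing with values in [-1, 1], it has a limit
   at +oo (its supremum), which must be that sign; it cannot be -1 because the
   supremum exceeds u(x', -1) >= -1.  The case xn < 0 is symmetric.
   Beyond the uniform convergence off the support, only the monotonicity of u
   in x_n and the bound |u| <= 1 are used. *)

Section Points.
Variables (R : realType) (m : nat).
Implicit Types (y : 'rV[R]_m) (t : R).

Lemma pt_widen y t (i : 'I_m) : pt y t 0 (widen_ord (leqnSn m) i) = y 0 i.
Proof.
rewrite /pt mxE; case: unliftP => [j|] /=.
  by move=> /(congr1 val) /=; rewrite /bump leqNgt ltn_ord /= add0n => /val_inj ->.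
by move=> /(congr1 val) /= /eqP; rewrite ltn_eqF.
Qed.

Lemma pt_last y t : pt y t 0 ord_max = t.
Proof. by rewrite /pt mxE unlift_none. Qed.

Lemma xprime_pt y t : xprime (pt y t) = y.
Proof. by apply/rowP => j; rewrite /xprime mxE pt_widen. Qed.

Lemma lastc_pt y t : lastc (pt y t) = t.
Proof. exact: pt_last. Qed.

Lemma ptZ c y t : c *: pt y t = pt (c *: y) (c * t).
Proof. by apply/rowP => k; rewrite !mxE; case: unlift => // j; rewrite mxE. Qed.

Lemma ptD y y' t t' : pt y t + pt y' t' = pt (y + y') (t + t').
Proof. by apply/rowP => k; rewrite !mxE; case: unlift => // j; rewrite !mxE. Qed.

Lemma ptB y y' t t' : pt y t - pt y' t' = pt (y - y') (t - t').
Proof. by apply/rowP => k; rewrite !mxE; case: unlift => // j; rewrite !mxE. Qed.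

Lemma pt_shift_last y t h : h *: ev R ord_max + pt y t = pt y (h + t).
Proof.
apply/rowP => k; rewrite /ev !mxE; case: unliftP => [j ->|->].
  by rewrite eqxx /= eq_sym (negbTE (neq_lift _ _)) mulr0 add0r.
by rewrite !eqxx mulr1.
Qed.

End Points.

Section EuclideanNorm.
Variables (R : realType) (k : nat).
Implicit Types (x : 'rV[R]_k).

Lemma enorm_ge0 x : 0 <= enorm x.
Proof. exact: sqrtr_ge0. Qed.

Lemma enorm0 : enorm (0 : 'rV[R]_k) = 0.
Proof. by rewrite /enorm big1 ?sqrtr0 // => i _; rewrite mxE expr0n. Qed.

Lemma enormZ c x : enorm (c *: x) = `|c| * enorm x.
Proof.
rewrite /enorm; under eq_bigr do rewrite mxE exprMn.
by rewrite -mulr_sumr sqrtrM ?sqr_ge0 // sqrtr_sqr.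
Qed.

Lemma norm_coord_le_enorm x i : `|x 0 i| <= enorm x.
Proof.
rewrite -sqrtr_sqr /enorm ler_wsqrtr // (bigD1 i) //= lerDl.
by apply: sumr_ge0 => j _; apply: sqr_ge0.
Qed.

Lemma enorm_le_sum_norm x : enorm x <= \sum_(i < k) `|x 0 i|.
Proof.
have [sq_le sum_ge0] : \sum_(i < k) x 0 i ^+ 2 <= (\sum_(i < k) `|x 0 i|) ^+ 2 /\
    0 <= \sum_(i < k) `|x 0 i|.
  apply: (big_rec2 (fun S T => S <= T ^+ 2 /\ 0 <= T)); first by rewrite expr0n.
  move=> i S T _ [ST T0]; split; last by rewrite addr_ge0.
  have := normr_ge0 (x 0 i); rewrite -[x 0 i ^+ 2]real_normK ?num_real; nra.
by rewrite /enorm -(ger0_norm sum_ge0) -sqrtr_sqr ler_wsqrtr.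
Qed.

(* A triangle inequality up to the factor [k] is all the support argument needs. *)
Lemma enormD_le x x' : enorm (x + x') <= k%:R * (enorm x + enorm x').
Proof.
apply: le_trans (enorm_le_sum_norm (x + x')) _.
rewrite -[k in k%:R]card_ord -sumr_const mulr_suml; apply: ler_sum => i _.
rewrite mxE mul1r; apply: le_trans (ler_normD _ _) _.
by apply: lerD; apply: norm_coord_le_enorm.
Qed.

Lemma continuous_sqrt_sum_sqr k' (F : 'I_k' -> 'rV[R]_k -> R) :
  (forall j, continuous (F j)) ->
  continuous (fun x => Num.sqrt (\sum_(j < k') F j x ^+ 2)).
Proof.
move=> Fc x; apply: (continuous_comp (g := Num.sqrt)); last exact: sqrt_continuous.
apply: (continuous_big add_continuous) => j _ y.
by apply: (continuous_comp (g := fun r : R => r ^+ 2)); [exact: Fc|exact: exprn_continuous].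
Qed.

Lemma eball_open (p : 'rV[R]_k) (r : R) : open (eball p r).
Proof.
have -> : eball p r = (fun x => Num.sqrt (\sum_(j < k) (x 0 j - p 0 j) ^+ 2))
    @^-1` `]-oo, r[.
  have enormBE x : enorm (x - p) = Num.sqrt (\sum_(j < k) (x 0 j - p 0 j) ^+ 2).
    by rewrite /enorm; congr Num.sqrt; apply: eq_bigr => j _; rewrite !mxE.
  by apply/seteqP; split => x; rewrite /eball /= enormBE in_itv.
apply: open_comp; last exact: lray_open.
move=> x _; apply: continuous_sqrt_sum_sqr => j y.
by apply: continuousB; [exact: coord_continuous|exact: cst_continuous].
Qed.

End EuclideanNorm.

Lemma enorm_pt0 (R : realType) m (y : 'rV[R]_m) : enorm (pt y 0) = enorm y.
Proof.
rewrite /enorm big_ord_recr /= pt_last expr0n /= addr0.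
by congr Num.sqrt; apply: eq_bigr => i _; rewrite pt_widen.
Qed.

Lemma cyl_open (R : realType) m (d h : R) : open (cyl d h : set 'rV[R]_m.+1).
Proof.
have -> : cyl d h = (fun x : 'rV[R]_m.+1 =>
    Num.sqrt (\sum_(j < m) x 0 (widen_ord (leqnSn m) j) ^+ 2)) @^-1` `]-oo, d[
   `&` (fun x : 'rV[R]_m.+1 => `|x 0 ord_max|) @^-1` `]-oo, h[.
  have enorm_xprimeE (x : 'rV[R]_m.+1) : enorm (xprime x) =
      Num.sqrt (\sum_(j < m) x 0 (widen_ord (leqnSn m) j) ^+ 2).
    by rewrite /enorm; congr Num.sqrt; apply: eq_bigr => j _; rewrite mxE.
  by apply/seteqP; split => x; rewrite /cyl /lastc /= -enorm_xprimeE !in_itv.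
apply: openI; (apply: open_comp; last exact: lray_open) => x _.
  by apply: continuous_sqrt_sum_sqr => j; exact: coord_continuous.
apply: (continuous_comp (f := fun x : 'rV[R]_m.+1 => x 0 ord_max) (g := Num.norm)).
  exact: coord_continuous.
exact: norm_continuous.
Qed.

Lemma not_msupp_near (R : realType) k (U : set 'rV[R]_k.+1)
    (mu : {measure set (BorelT R k.+1) -> \bar R}) (q : 'rV[R]_k.+1) :
  open U -> U q -> ~ msupp U mu q ->
  exists2 r, 0 < r & forall p, U p -> enorm (p - q) < r -> ~ msupp U mu p.
Proof.
move=> oU Uq q_supp.
have [r r_gt0 mu0] : exists2 r, 0 < r & ~ (0 < mu (eball q r `&` U))%E.
  apply: contrapT => all_pos; apply: q_supp; split => // r r_gt0.
  by apply: contrapT => mu_le0; apply: all_pos; exists r.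
have k_gt0 : 0 < k.+1%:R :> R by rewrite ltr0n.
pose r' := r / (2 * k.+1%:R).
have r'_gt0 : 0 < r' by rewrite divr_gt0 ?mulr_gt0.
exists r' => // p Up pq [_ p_supp].
have : (mu (eball p r' `&` U) <= mu (eball q r `&` U))%E.
  have mball (c : 'rV[R]_k.+1) s : measurable (eball c s `&` U : set (BorelT R k.+1)).
    by apply: measurableI; apply: sub_sigma_algebra => //; exact: eball_open.
  apply: le_measure; rewrite ?inE // => y [py Uy]; split => //.
  rewrite /eball /= -(subrK p y) -addrA.
  apply: le_lt_trans (enormD_le _ _) _.
  rewrite mulrC -ltr_pdivlMr //.
  have -> : r / k.+1%:R = r' + r' by rewrite /r'; field; rewrite gt_eqF.
  exact: ltrD.
by move=> le_mu; apply: mu0; exact: lt_le_trans (p_supp _ r'_gt0) le_mu.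
Qed.

Section HorizontalSegment.
Variables (R : realType) (m : nat) (x' : 'rV[R]_m) (xn : R).

Definition hsegment (del : R) : set 'rV[R]_m.+1 :=
  (fun s => pt (s *: x') xn) @` `[0, del].

Lemma continuous_hsegment_param : continuous (fun s : R => pt (s *: x') xn).
Proof.
have -> : (fun s : R => pt (s *: x') xn) = (fun s => s *: pt x' 0 + pt 0 xn).
  by apply/funext => s; rewrite ptZ ptD mulr0 addr0 add0r.
by move=> s; apply: cvgD; [apply: cvgZr_tmp; exact: cvg_id|exact: cvg_cst].
Qed.

Lemma hsegment_compact del : compact (hsegment del).
Proof.
apply: continuous_compact; last exact: segment_compact.
exact/continuous_subspaceT/continuous_hsegment_param.
Qed.

Lemma hsegment_connected del : connected (hsegment del).
Proof.
apply: connected_continuous_connected.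
  by apply/connected_intervalP; exact: interval_is_interval.
exact/continuous_subspaceT/continuous_hsegment_param.
Qed.

Lemma enorm_hsegment_sub del p :
  hsegment del p -> enorm (p - pt 0 xn) <= del * enorm x'.
Proof.
case=> s /= /[!in_itv] /= /andP[s_ge0 s_le] <-.
rewrite ptB subr0 subrr enorm_pt0 enormZ ger0_norm //.
by apply: ler_wpM2r => //; exact: enorm_ge0.
Qed.

Lemma hsegment_sub_cyl (d h del : R) :
  `|xn| < h -> del * enorm x' < d -> hsegment del `<=` cyl d h.
Proof.
move=> xn_lt del_lt _ [s /= /[!in_itv] /= /andP[s_ge0 s_le] <-].
rewrite /cyl /= xprime_pt lastc_pt enormZ ger0_norm //; split => //.
by apply: le_lt_trans del_lt; apply: ler_wpM2r => //; exact: enorm_ge0.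
Qed.

End HorizontalSegment.

Lemma hsegment_sub_cyl_msuppC (R : realType) m (d h xn : R) (x' : 'rV[R]_m)
    (mu : {measure set (BorelT R m.+1) -> \bar R}) :
  0 < d -> `|xn| < h -> ~ msupp (cyl d h) mu (pt 0 xn) ->
  exists2 del, 0 < del & hsegment x' xn del `<=` cyl d h `\` msupp (cyl d h) mu.
Proof.
move=> d_gt0 xn_lt xn_supp.
have cyl_xn : cyl d h (pt (0 : 'rV[R]_m) xn) by rewrite /cyl /= xprime_pt lastc_pt enorm0.
have [r r_gt0 near_supp] := not_msupp_near (@cyl_open R m d h) cyl_xn xn_supp.
have x'1_gt0 : 0 < enorm x' + 1 by rewrite ltr_wpDl ?enorm_ge0.
pose del := Num.min r d / (enorm x' + 1).
have del_gt0 : 0 < del by rewrite /del divr_gt0 // lt_min r_gt0.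
have /andP[del_lt_r del_lt_d] : (del * enorm x' < r) && (del * enorm x' < d).
  by rewrite -lt_min -[ltRHS](divfK (lt0r_neq0 x'1_gt0)) ltr_pM2l ?ltrDl.
exists del => // p seg_p; split; first exact: hsegment_sub_cyl seg_p.
apply: near_supp; first exact: hsegment_sub_cyl seg_p.
exact: le_lt_trans (enorm_hsegment_sub seg_p) del_lt_r.
Qed.

Lemma resc_pt (R : realType) m (u : 'rV[R]_m.+1 -> R) (e xn : R) (x' : 'rV[R]_m) :
  e != 0 -> resc u e (pt (e *: x') xn) = u (pt x' (xn / e)).
Proof. by move=> e0; rewrite /resc ptZ scalerA mulVf // scale1r mulrC. Qed.

(* By [resc_pt], the segment point [(eps_j x', xn)] carries [u(x', xn / eps_j)]. *)
Lemma cvg_vertical_of_unif_hsegment (R : realType) m (u : 'rV[R]_m.+1 -> R)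
    (eps : nat -> R) (x' : 'rV[R]_m) (xn del s : R) :
  (forall j, 0 < eps j) -> eps @ \oo --> 0 -> 0 < del ->
  (forall delta, 0 < delta -> \forall j \near \oo,
     forall x, hsegment x' xn del x -> `|resc u (eps j) x - s| < delta) ->
  u (pt x' (xn / eps j)) @[j --> \oo] --> s.
Proof.
move=> eps_gt0 eps0 del_gt0 unif; apply/cvgrPdist_lt => delta delta_gt0.
have eps_le : \forall j \near \oo, eps j <= del.
  move/cvgrPdist_lt: eps0 => /(_ del del_gt0); apply: filterS => j.
  by rewrite sub0r normrN gtr0_norm // => /ltW.
apply: filterS2 (unif _ delta_gt0) eps_le => j unif_j eps_j.
rewrite distrC -resc_pt ?gt_eqF //; apply: unif_j.
by exists (eps j) => //=; rewrite in_itv /= eps_j (ltW (eps_gt0 j)).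
Qed.

Section VerticalLines.
Variables (R : realType) (m : nat) (f : 'rV[R]_m.+1 -> R) (x' : 'rV[R]_m).
Hypothesis f_derivable : forall x, derivable f x (ev R ord_max).

Lemma is_derive_pt_last (t : R) :
  is_derive t 1 (fun s => f (pt x' s)) (partial ord_max f (pt x' t)).
Proof.
have E : (fun h : R => h^-1 *: (((fun s => f (pt x' s)) \o shift t) (h *: 1) - f (pt x' t)))
    = (fun h : R => h^-1 *: ((f \o shift (pt x' t)) (h *: ev R ord_max) - f (pt x' t))).
  apply/funext => h /=; rewrite pt_shift_last.
  by congr (_ *: (f (pt _ (_ + _)) - _)); exact: mulr1.
by split; [rewrite /derivable E; exact: f_derivable|rewrite /partial /derive E].
Qed.

Lemma pt_last_increasing :
  (forall x, 0 < partial ord_max f x) -> {homo (fun t => f (pt x' t)) : a b / a < b}.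
Proof.
move=> f_incr a b ab.
have f_cont : {within `[a, b], continuous (fun s => f (pt x' s))}.
  by apply: derivable_within_continuous => t _; case: (is_derive_pt_last t).
have [c _ fba] := MVT ab (fun t _ => is_derive_pt_last t) f_cont.
by rewrite -subr_gt0 fba mulr_gt0 // subr_gt0.
Qed.

End VerticalLines.

Section IncreasingUnitValued.
Variables (R : realType) (g : R -> R) (t : nat -> R) (s : R).
Hypotheses (g_incr : {homo g : a b / a < b}) (g_bnd : forall x, -1 <= g x <= 1).
Hypothesis (s_pm1 : s = 1 \/ s = -1).

Lemma increasing_pm1_cvgy :
  t @ \oo --> +oo -> g (t j) @[j --> \oo] --> s -> g x @[x --> +oo] --> (1 : R).
Proof.
move=> t_y gt_s.
have g_nd : nondecreasing_fun g.
  by move=> a b; rewrite le_eqVlt => /predU1P[->//|/g_incr/ltW].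
have g_ub : has_ubound (range g) by exists 1 => _ [x _ <-]; case/andP: (g_bnd x).
have g_sup := nondecreasing_cvgr g_nd g_ub.
have s_sup : s = sup (range g).
  exact: (cvg_unique (T := R) _ gt_s (cvg_comp _ _ t_y g_sup)).
have sup_gt : -1 < sup (range g).
  have /andP[g1_ge _] := g_bnd (-1).
  apply: le_lt_trans g1_ge (lt_le_trans (g_incr (ltrN10 R)) _).
  by apply: sup_upper_bound; [split; [exists (g 0), 0|]|exists 0].
case: s_pm1 => s_eq; first by rewrite -s_eq s_sup.
by move: sup_gt; rewrite -s_sup s_eq ltxx.
Qed.

End IncreasingUnitValued.

Lemma increasing_pm1_cvgNy (R : realType) (g : R -> R) (t : nat -> R) (s : R) :
  {homo g : a b / a < b} -> (forall x, -1 <= g x <= 1) -> s = 1 \/ s = -1 ->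
  t @ \oo --> -oo -> g (t j) @[j --> \oo] --> s -> g x @[x --> -oo] --> (-1 : R).
Proof.
move=> g_incr g_bnd s_pm1 t_Ny gt_s.
pose h x := - g (- x).
have h_incr : {homo h : a b / a < b} by move=> a b ab; rewrite ltrN2 g_incr // ltrN2.
have h_bnd x : -1 <= h x <= 1.
  by have /andP[lo hi] := g_bnd (- x); rewrite /h; apply/andP; split; lra.
have Ns_pm1 : - s = 1 \/ - s = -1 by case: s_pm1 => ->; [right|left]; rewrite ?opprK.
have Nt_y : (- t j) @[j --> \oo] --> +oo by apply/cvgNry.
have hNt : h (- t j) @[j --> \oo] --> - s.
  by rewrite /h; under eq_fun do rewrite opprK; exact: cvgN.
apply/cvgNy_compNP.
have -> : g \o -%R = - h by apply/funext => x; rewrite /h /= opprK.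
exact: (cvgN (increasing_pm1_cvgy h_incr h_bnd Ns_pm1 Nt_y hNt)).
Qed.

Section DivisionByVanishing.
Variables (R : realType) (eps : nat -> R).
Hypotheses (eps_gt0 : forall j, 0 < eps j) (eps0 : eps @ \oo --> 0).

Let cvg_eps_div a : eps j / a @[j --> \oo] --> 0.
Proof. by rewrite -(mul0r a^-1); apply: cvgM => //; exact: cvg_cst. Qed.

Lemma cvgy_div_eps a : 0 < a -> a / eps j @[j --> \oo] --> +oo.
Proof.
move=> a_gt0; under eq_fun do rewrite -invf_div.
by apply/cvgrVy; [near=> j; rewrite divr_gt0|exact: cvg_eps_div].
Unshelve. all: by end_near. Qed.

Lemma cvgNy_div_eps a : a < 0 -> a / eps j @[j --> \oo] --> -oo.
Proof.
move=> a_lt0; under eq_fun do rewrite -invf_div.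
by apply/cvgrVNy; [near=> j; rewrite pmulr_rlt0 ?invr_lt0|exact: cvg_eps_div].
Unshelve. all: by end_near. Qed.

End DivisionByVanishing.

Lemma cvg_vertical_pm1 (R : realType) m (d h : R) (u : 'rV[R]_m.+1 -> R)
    (eps : nat -> R) (mu : {measure set (BorelT R m.+1) -> \bar R})
    (xn : R) (x' : 'rV[R]_m) :
  0 < d -> (forall j, 0 < eps j) -> eps @ \oo --> 0 ->
  (forall K : set 'rV[R]_m.+1, compact K -> connected K ->
     K `<=` cyl d h `\` msupp (cyl d h) mu ->
     exists s : R, (s = 1 \/ s = -1) /\
       forall delta : R, 0 < delta -> \forall j \near \oo,
         forall x, K x -> `|resc u (eps j) x - s| < delta) ->
  `|xn| < h -> ~ msupp (cyl d h) mu (pt 0 xn) ->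
  exists2 s : R, s = 1 \/ s = -1 & u (pt x' (xn / eps j)) @[j --> \oo] --> s.
Proof.
move=> d_gt0 eps_gt0 eps0 HT_unif xn_lt xn_supp.
have [del del_gt0 seg_sub] := hsegment_sub_cyl_msuppC x' d_gt0 xn_lt xn_supp.
have [s [s_pm1 unif]] :=
  HT_unif _ (@hsegment_compact R m x' xn del) (@hsegment_connected R m x' xn del) seg_sub.
by exists s => //; exact: cvg_vertical_of_unif_hsegment eps_gt0 eps0 del_gt0 unif.
Qed.

Theorem lemma3p1 (R : realType) (m : nat) (hm : (1 <= m)%N)
  (d_o h_o : R) (hd : 0 < d_o) (hh : 0 < h_o)
  (u : 'rV[R]_m.+1 -> R)
  (uC2 : C2 u)
  (urange : forall x, -1 <= u x <= 1)
  (ueq : forall x, lap u x = Wp (u x))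
  (umono : forall x, 0 < partial ord_max u x)
  (uenergy : exists C : R, 0 < C /\ forall r : R, 1 < r ->
     (iint (fun x => ((gradsq u x / 2 + W (u x)) * \1_(eball 0 r) x)%:E)
        <= (C * r ^+ m)%:E)%E)
  (eps : nat -> R) (eps_pos : forall j, 0 < eps j) (eps_to0 : eps @ \oo --> 0)
  (mu : {measure set (BorelT R m.+1) -> \bar R})
  (mu_radon : forall K : set 'rV[R]_m.+1, compact K -> K `<=` cyl d_o h_o ->
     (mu K < +oo)%E)
  (mu_lim : forall phi : 'rV[R]_m.+1 -> R, Cc_in (cyl d_o h_o) phi ->
     (fun j => iint (fun x => (phi x * edens u (eps j) x)%:E)) @ \oo -->
       (\int[mu]_(x in cyl d_o h_o) (phi x)%:E)%E)
  (HT_unif : forall K : set 'rV[R]_m.+1, compact K -> connected K ->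
     K `<=` cyl d_o h_o `\` msupp (cyl d_o h_o) mu ->
     exists s : R, (s = 1 \/ s = -1) /\
       forall delta : R, 0 < delta -> \forall j \near \oo,
         forall x, K x -> `|resc u (eps j) x - s| < delta)
  (HT_conc : forall U : set 'rV[R]_m.+1, open U -> compact (closure U) ->
     closure U `<=` cyl d_o h_o ->
     forall c : R, -1 < c < 1 -> forall delta : R, 0 < delta ->
     \forall j \near \oo, forall x, U x -> `|resc u (eps j) x| <= c ->
       exists p, msupp (cyl d_o h_o) mu p /\ enorm (x - p) < delta) :
  ((exists xn : R, 0 < xn < h_o /\ ~ msupp (cyl d_o h_o) mu (pt 0 xn)) ->
     forall x' : 'rV[R]_m, u (pt x' t) @[t --> +oo] --> (1 : R)) /\
  ((exists xn : R, - h_o < xn < 0 /\ ~ msupp (cyl d_o h_o) mu (pt 0 xn)) ->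
     forall x' : 'rV[R]_m, u (pt x' t) @[t --> -oo] --> (-1 : R)).
Proof.
have u_incr x' := pt_last_increasing x' (fun x => (uC2.2 ord_max).1 x) umono.
split=> -[xn [/andP[xn_gt xn_lt] xn_supp]] x'.
- have xn_h : `|xn| < h_o by rewrite gtr0_norm.
  have [s s_pm1 cvg_s] := cvg_vertical_pm1 x' hd eps_pos eps_to0 HT_unif xn_h xn_supp.
  exact: increasing_pm1_cvgy (u_incr x') _ s_pm1 (cvgy_div_eps _ _ _) cvg_s.
- have xn_h : `|xn| < h_o by rewrite ltr0_norm // ltrNl.
  have [s s_pm1 cvg_s] := cvg_vertical_pm1 x' hd eps_pos eps_to0 HT_unif xn_h xn_supp.
  exact: increasing_pm1_cvgNy (u_incr x') _ s_pm1 (cvgNy_div_eps _ _ _) cvg_s.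
Qed.
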